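(* For every $n\ge1$ and $t\in(0,1)$, $$n\beta+n(n+\gamma)t-(2n+\alpha+\beta+\gamma)(t-1)r_n+(2n+\alpha+\beta+\gamma)ty_n+(t-1)\sum_{j=0}^{n-1}R_j=0.$$
   Context: Fix $\alpha,\beta,\gamma>0$ and real constants $A,B$ with $A\ge0$, $A+B\ge0$, not both $A$ and $A+B$ equal to $0$. Let $\theta$ be the Heaviside function. For $t\in(0,1)$ put $w(x)=x^{\alpha}(1-x)^{\beta}|x-t|^{\gamma}(A+B\theta(x-t))$ on $[0,1]$. Let $P_n$ be the monic orthogonal polynomials w.r.t. $w$ on $[0,1]$ with $\int_0^1P_mP_nw\,dx=h_n\delta_{mn}$. Define $R_n=\frac{\beta}{h_n}\int_0^1\frac{P_n^2(y)w(y)}{1-y}dy$, and for $n\ge1$, $y_n=\frac{\alpha}{h_{n-1}}\int_0^1\frac{P_nP_{n-1}w}{y}dy$, $r_n=\frac{\beta}{h_{n-1}}\int_0^1\frac{P_nP_{n-1}w}{1-y}dy$. *)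

From Stdlib Require Import Reals ClassicalEpsilon.
Open Scope R_scope.

(* real power x^y for x >= 0, with the convention 0^y = 0 (y > 0) *)
Definition rpow (x y : R) : R :=
  if Req_EM_T x 0 then 0 else Rpower x y.

(* Heaviside function (value at 0 is irrelevant for the integrals) *)
Definition heaviside (x : R) : R := if Rle_dec 0 x then 1 else 0.

Definition weight (a b g A B t x : R) : R :=
  rpow x a * rpow (1 - x) b * rpow (Rabs (x - t)) g * (A + B * heaviside (x - t)).

Definition improper_int01 (f : R -> R) (l : R) : Prop :=
  forall eps, 0 < eps -> exists delta, 0 < delta /\
    forall u v, 0 < u < delta -> 1 - delta < v < 1 -> u < v ->
      exists pr : Riemann_integrable f u v, Rabs (RiemannInt pr - l) < eps.

Definition Int01 (f : R -> R) : R :=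
  epsilon (inhabits 0) (fun l => improper_int01 f l).

Definition peval (c : nat -> nat -> R) (n : nat) (x : R) : R :=
  sum_f_R0 (fun k => c n k * x ^ k) n.

Definition monic_orthogonal (c : nat -> nat -> R) (w : R -> R) : Prop :=
  (forall n, c n n = 1) /\
  (forall m n, m <> n -> Int01 (fun x => peval c m x * peval c n x * w x) = 0).

Definition hn (c : nat -> nat -> R) (w : R -> R) (n : nat) : R :=
  Int01 (fun y => peval c n y ^ 2 * w y).

Definition Rn (b : R) (c : nat -> nat -> R) (w : R -> R) (n : nat) : R :=
  b / hn c w n * Int01 (fun y => peval c n y ^ 2 * w y / (1 - y)).

Definition yn (a : R) (c : nat -> nat -> R) (w : R -> R) (n : nat) : R :=
  a / hn c w (n - 1) * Int01 (fun y => peval c n y * peval c (n - 1) y * w y / y).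

Definition rn (b : R) (c : nat -> nat -> R) (w : R -> R) (n : nat) : R :=
  b / hn c w (n - 1) * Int01 (fun y => peval c n y * peval c (n - 1) y * w y / (1 - y)).

From Pilot Require Import Defs.
From Stdlib Require Import Reals Lra Lia ClassicalEpsilon FunctionalExtensionality.
From Coquelicot Require Import Coquelicot.
(* Coquelicot also defines an [Rn]. *)
Import Defs.
Open Scope R_scope.

(* Write [w(x) = x^a (1-x)^b k(x)] with [k(x) = |x - t|^g (A + B theta(x - t))].
   The factor [x - t] kills the jump of [k] at [t]: [(x - t) k(x)] is [C^1] with
   derivative [(g + 1) k(x)].  So for every polynomial [Q], the function
   [Q(x) (x - t) w(x)], which vanishes at 0 and 1, gives
     [int_0^1 (Q'(x) (x - t) + (a+b+g+1) Q - a t Q / x - b (1-t) Q / (1-x)) w = 0].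
   Let [p_n] be the coefficient of [x^(n-1)] in [P_n].  For [Q = P_n P_(n-1)],
   orthogonality only leaves the two top coefficients of [(x - t) P_n'], and
     [t y_n + (1 - t) r_n = - p_n - n t].
   For [Q = x P_j^2] it gives
     [(1 - t) R_j = (2j+2+a+b+g) (p_j - p_(j+1)) - 2 p_j - t (2j+1+a+b) + b],
   which telescopes to
     [(1 - t) sum_(j<n) R_j = - (2n+a+b+g) p_n + n b - t n (n+a+b)].
   Eliminating [p_n] between the first and the last identity gives the theorem. *)

Ltac Rabs_cases :=
  unfold Rabs in *;
  repeat match goal with
  | |- context [Rcase_abs ?x] => destruct (Rcase_abs x)
  | H : context [Rcase_abs ?x] |- _ => destruct (Rcase_abs x)
  end; lra.

(** * Improper integrals over (0,1) *)

Definition is_RInt01 (f : R -> R) (l : R) : Prop :=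
  forall eps, 0 < eps -> exists delta, 0 < delta /\
    forall u v, 0 < u < delta -> 1 - delta < v < 1 -> u < v ->
      ex_RInt f u v /\ Rabs (RInt f u v - l) < eps.

Lemma is_RInt01_improper_int01 f l : is_RInt01 f l -> improper_int01 f l.
Proof.
  intros H eps Heps. destruct (H eps Heps) as [d [Hd H']].
  exists d; split; auto. intros u v Hu Hv Huv.
  destruct (H' u v Hu Hv Huv) as [Hex Hl].
  exists (ex_RInt_Reals_0 _ _ _ Hex). rewrite <- RInt_Reals. exact Hl.
Qed.

Lemma improper_int01_is_RInt01 f l : improper_int01 f l -> is_RInt01 f l.
Proof.
  intros H eps Heps. destruct (H eps Heps) as [d [Hd H']].
  exists d; split; auto. intros u v Hu Hv Huv.
  destruct (H' u v Hu Hv Huv) as [pr Hl].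
  split; [apply ex_RInt_Reals_1; exact pr|]. rewrite (RInt_Reals _ _ _ pr). exact Hl.
Qed.

Lemma is_RInt01_unique f l1 l2 : is_RInt01 f l1 -> is_RInt01 f l2 -> l1 = l2.
Proof.
  intros H1 H2. destruct (Req_dec (l1 - l2) 0) as [E|E]; [lra|]. exfalso.
  set (e := Rabs (l1 - l2) / 2).
  assert (He : 0 < e) by (unfold e; apply Rabs_pos_lt in E; lra).
  destruct (H1 e He) as [d1 [Hd1 H1']]. destruct (H2 e He) as [d2 [Hd2 H2']].
  set (m := Rmin (Rmin d1 d2) (1/2)).
  assert (Hm : 0 < m) by (unfold m; repeat apply Rmin_glb_lt; lra).
  assert (m <= Rmin d1 d2 /\ m <= 1/2) as [Hm12 Hm3] by (split; [apply Rmin_l|apply Rmin_r]).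
  pose proof (Rmin_l d1 d2). pose proof (Rmin_r d1 d2).
  destruct (H1' (m/2) (1 - m/2)) as [_ A1]; try lra.
  destruct (H2' (m/2) (1 - m/2)) as [_ A2]; try lra.
  unfold e in *. revert A1 A2. generalize (RInt f (m/2) (1 - m/2)). intros r. Rabs_cases.
Qed.

Lemma Int01_correct f l : is_RInt01 f l -> Int01 f = l.
Proof.
  intros H. unfold Int01.
  assert (Ex : exists l, improper_int01 f l) by (exists l; apply is_RInt01_improper_int01; auto).
  pose proof (epsilon_spec (inhabits 0) (fun l => improper_int01 f l) Ex) as S.
  apply improper_int01_is_RInt01 in S. eapply is_RInt01_unique; eauto.
Qed.

Lemma is_RInt01_ext f g l :
  (forall x, 0 < x < 1 -> f x = g x) -> is_RInt01 f l -> is_RInt01 g l.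
Proof.
  intros E H eps Heps. destruct (H eps Heps) as [d [Hd H']].
  exists d; split; auto. intros u v Hu Hv Huv.
  destruct (H' u v Hu Hv Huv) as [Hex Hl].
  assert (E' : forall x, Rmin u v < x < Rmax u v -> f x = g x).
  { intros x Hx. rewrite Rmin_left, Rmax_right in Hx by lra. apply E; lra. }
  split; [eapply ex_RInt_ext; eauto|].
  rewrite <- (RInt_ext _ _ _ _ E'). exact Hl.
Qed.

Lemma is_RInt01_plus f g l1 l2 :
  is_RInt01 f l1 -> is_RInt01 g l2 -> is_RInt01 (fun x => f x + g x) (l1 + l2).
Proof.
  intros H1 H2 eps Heps.
  destruct (H1 (eps/2)) as [d1 [Hd1 H1']]; [lra|].
  destruct (H2 (eps/2)) as [d2 [Hd2 H2']]; [lra|].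
  exists (Rmin d1 d2); split; [apply Rmin_glb_lt; auto|].
  intros u v Hu Hv Huv. pose proof (Rmin_l d1 d2). pose proof (Rmin_r d1 d2).
  destruct (H1' u v) as [E1 A1]; try lra. destruct (H2' u v) as [E2 A2]; try lra.
  split; [apply (ex_RInt_plus f g); auto|].
  rewrite (RInt_plus f g) by auto. unfold plus; simpl.
  revert A1 A2. generalize (RInt f u v) (RInt g u v). intros; Rabs_cases.
Qed.

Lemma is_RInt01_scal k f l : is_RInt01 f l -> is_RInt01 (fun x => k * f x) (k * l).
Proof.
  intros H eps Heps.
  destruct (H (eps / (Rabs k + 1))) as [d [Hd H']].
  { apply Rdiv_lt_0_compat; auto. pose proof (Rabs_pos k); lra. }
  exists d; split; auto. intros u v Hu Hv Huv.
  destruct (H' u v Hu Hv Huv) as [E A].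
  split; [apply (ex_RInt_scal f); auto|].
  rewrite (RInt_scal f) by auto. unfold scal; simpl; unfold mult; simpl.
  replace (k * RInt f u v - k * l) with (k * (RInt f u v - l)) by ring.
  rewrite Rabs_mult.
  apply Rmult_lt_compat_l with (r := Rabs k + 1) in A; [|pose proof (Rabs_pos k); lra].
  replace ((Rabs k + 1) * (eps / (Rabs k + 1))) with eps in A
    by (field; pose proof (Rabs_pos k); lra).
  pose proof (Rabs_pos (RInt f u v - l)). nra.
Qed.

Definition lim_right0 (G : R -> R) (L : R) := forall eps, 0 < eps -> exists d, 0 < d /\
  forall x, 0 < x < d -> Rabs (G x - L) < eps.
Definition lim_left1 (G : R -> R) (L : R) := forall eps, 0 < eps -> exists d, 0 < d /\
  forall x, 1 - d < x < 1 -> Rabs (G x - L) < eps.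

Lemma is_RInt01_derive (G dG : R -> R) L0 L1 :
  (forall x, 0 < x < 1 -> is_derive G x (dG x)) ->
  (forall x, 0 < x < 1 -> continuous dG x) ->
  lim_right0 G L0 -> lim_left1 G L1 -> is_RInt01 dG (L1 - L0).
Proof.
  intros HD HC H0 H1 eps Heps.
  destruct (H0 (eps/2)) as [d0 [Hd0 H0']]; [lra|].
  destruct (H1 (eps/2)) as [d1 [Hd1 H1']]; [lra|].
  exists (Rmin d0 d1); split; [apply Rmin_glb_lt; auto|].
  intros u v Hu Hv Huv. pose proof (Rmin_l d0 d1). pose proof (Rmin_r d0 d1).
  assert (I : is_RInt dG u v (minus (G v) (G u))).
  { apply (is_RInt_derive G dG); rewrite Rmin_left, Rmax_right by lra;
      intros; [apply HD|apply HC]; lra. }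
  split; [eexists; eauto|].
  rewrite (is_RInt_unique _ _ _ _ I).
  assert (A0 := H0' u ltac:(lra)). assert (A1 := H1' v ltac:(lra)).
  unfold minus, plus, opp; simpl. revert A0 A1. generalize (G u) (G v). intros; Rabs_cases.
Qed.

Lemma ex_RInt_inside01 (h : R -> R) :
  (forall x, 0 < x < 1 -> continuous h x) ->
  forall u v, 0 < u -> u <= v -> v < 1 -> ex_RInt h u v.
Proof.
  intros HC u v ? ? ?. apply (ex_RInt_continuous (V := R_CompleteNormedModule)).
  rewrite Rmin_left, Rmax_right by lra. intros; apply HC; lra.
Qed.

Lemma RInt_inside01_monotone (h : R -> R) u0 v0 u v :
  (forall x, 0 < x < 1 -> continuous h x) -> (forall x, 0 < x < 1 -> 0 <= h x) ->
  0 < u <= u0 -> u0 <= v0 -> v0 <= v < 1 -> RInt h u0 v0 <= RInt h u v.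
Proof.
  intros HC HP Hu Huv Hv. pose proof (ex_RInt_inside01 h HC) as Hex.
  rewrite <- (RInt_Chasles h u u0 v) by (apply Hex; lra).
  rewrite <- (RInt_Chasles h u0 v0 v) by (apply Hex; lra).
  assert (0 <= RInt h u u0) by (apply RInt_ge_0; [lra|apply Hex; lra|intros; apply HP; lra]).
  assert (0 <= RInt h v0 v) by (apply RInt_ge_0; [lra|apply Hex; lra|intros; apply HP; lra]).
  unfold plus; simpl. lra.
Qed.

(* A nonnegative integrand converges as soon as its integrals over compact
   subintervals are bounded: the limit is their supremum. *)
Lemma ex_RInt01_nonneg (h : R -> R) M :
  (forall x, 0 < x < 1 -> continuous h x) ->
  (forall x, 0 < x < 1 -> 0 <= h x) ->
  (forall u v, 0 < u -> u < v -> v < 1 -> RInt h u v <= M) ->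
  exists l, is_RInt01 h l.
Proof.
  intros HC HP HM.
  set (E := fun r => exists u v, 0 < u /\ u < v /\ v < 1 /\ r = RInt h u v).
  assert (Hb : bound E) by (exists M; intros r [u [v [? [? [? ->]]]]]; auto).
  assert (Hne : exists r, E r)
    by (exists (RInt h (1/4) (3/4)); exists (1/4), (3/4); repeat split; lra).
  destruct (completeness E Hb Hne) as [l [Hub Hlub]].
  exists l. intros eps Heps.
  assert (exists r, E r /\ l - eps < r) as [r [[u0 [v0 [? [? [? ->]]]]] Hr]].
  { apply Classical_Prop.NNPP; intro N.
    assert (l <= l - eps); [|lra]. apply Hlub. intros r Er.
    apply Rnot_lt_le. intro; apply N; exists r; auto. }
  exists (Rmin u0 (1 - v0)); split; [apply Rmin_glb_lt; lra|].
  intros u v Hu Hv Huv. pose proof (Rmin_l u0 (1 - v0)). pose proof (Rmin_r u0 (1 - v0)).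
  split; [apply ex_RInt_inside01; auto; lra|].
  assert (Hle : RInt h u v <= l) by (apply Hub; exists u, v; repeat split; lra).
  assert (Hge : RInt h u0 v0 <= RInt h u v) by (apply RInt_inside01_monotone; auto; lra).
  revert Hle Hge Hr. generalize (RInt h u v) (RInt h u0 v0). intros; Rabs_cases.
Qed.

Lemma ex_RInt01_dominated (f gd : R -> R) K M :
  (forall x, 0 < x < 1 -> continuous f x) ->
  (forall x, 0 < x < 1 -> continuous gd x) ->
  (forall x, 0 < x < 1 -> 0 <= gd x) ->
  0 <= K -> (forall x, 0 < x < 1 -> Rabs (f x) <= K * gd x) ->
  (forall u v, 0 < u -> u < v -> v < 1 -> RInt gd u v <= M) ->
  exists l, is_RInt01 f l.
Proof.
  intros Cf Cg Pg HK Hd HM.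
  pose proof (ex_RInt_inside01 f Cf) as Hexf. pose proof (ex_RInt_inside01 gd Cg) as Hexg.
  assert (CKg : forall x, 0 < x < 1 -> continuous (fun x => K * gd x) x)
    by (intros; apply (continuous_scal_r K gd); auto).
  destruct (ex_RInt01_nonneg gd M Cg Pg HM) as [lg Ig].
  destruct (ex_RInt01_nonneg (fun x => f x + K * gd x) (2 * K * M)) as [lh Ih].
  - intros x Hx. apply (continuous_plus f (fun x => K * gd x)); auto.
  - intros x Hx. specialize (Hd x Hx). revert Hd. Rabs_cases.
  - intros u v Hu Huv Hv.
    apply Rle_trans with (RInt (fun x => 2 * K * gd x) u v).
    + apply RInt_le; [lra| | |].
      * apply (ex_RInt_plus f (fun x => K * gd x)); [apply Hexf; lra|].
        apply (ex_RInt_scal gd). apply Hexg; lra.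
      * apply (ex_RInt_scal gd). apply Hexg; lra.
      * intros x Hx. specialize (Hd x ltac:(lra)). revert Hd. Rabs_cases.
    + rewrite (RInt_scal gd) by (apply Hexg; lra). unfold scal; simpl; unfold mult; simpl.
      specialize (HM u v Hu Huv Hv). nra.
  - exists (lh + (-K) * lg).
    apply is_RInt01_ext with (fun x => (f x + K * gd x) + (-K) * gd x); [intros; ring|].
    apply is_RInt01_plus; auto. apply is_RInt01_scal; auto.
Qed.

Lemma continuous_eps_delta (f : R -> R) x :
  continuous f x <->
  forall eps, 0 < eps -> exists d, 0 < d /\
    forall y, Rabs (y - x) < d -> Rabs (f y - f x) < eps.
Proof.
  split; intros H.
  - apply continuity_pt_filterlim in H. intros eps Heps. destruct (H eps Heps) as [d [Hd H']]. exists d; split; auto.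
    intros y Hy. destruct (Req_dec y x) as [->|Hne].
    + unfold Rminus. rewrite Rplus_opp_r, Rabs_R0. lra.
    + apply H'. split; [split; [exact I|auto]|exact Hy].
  - apply continuity_pt_filterlim. intros eps Heps.
    destruct (H eps Heps) as [d [Hd H']]. exists d; split; auto. intros y [_ Hy]. apply H'. exact Hy.
Qed.

Lemma is_RInt01_gt_0 (h : R -> R) l x0 :
  (forall x, 0 < x < 1 -> continuous h x) ->
  (forall x, 0 < x < 1 -> 0 <= h x) -> 0 < x0 < 1 -> 0 < h x0 -> is_RInt01 h l -> 0 < l.
Proof.
  intros HC HP Hx0 Hpos Hl.
  pose proof (ex_RInt_inside01 h HC) as Hex.
  destruct (proj1 (continuous_eps_delta h x0) (HC x0 Hx0) (h x0 / 2)) as [r [Hr Hr']]; [lra|].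
  set (r' := Rmin (Rmin (r/2) (x0/2)) ((1 - x0)/2)).
  assert (Hr1 : 0 < r') by (unfold r'; repeat apply Rmin_glb_lt; lra).
  assert (Hr2 : r' <= r/2 /\ r' <= x0/2 /\ r' <= (1-x0)/2).
  { pose proof (Rmin_l (Rmin (r/2) (x0/2)) ((1 - x0)/2)).
    pose proof (Rmin_r (Rmin (r/2) (x0/2)) ((1 - x0)/2)).
    pose proof (Rmin_l (r/2) (x0/2)). pose proof (Rmin_r (r/2) (x0/2)). unfold r'. lra. }
  set (m := RInt h (x0 - r') (x0 + r')).
  assert (Hm : r' * h x0 <= m).
  { unfold m. apply Rle_trans with (RInt (fun _ => h x0 / 2) (x0 - r') (x0 + r')).
    - rewrite RInt_const. unfold scal; simpl; unfold mult; simpl. lra.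
    - apply RInt_le; [lra|apply (ex_RInt_const (V := R_NormedModule))|apply Hex; lra|].
      intros x Hx. specialize (Hr' x ltac:(Rabs_cases)). revert Hr'. Rabs_cases. }
  destruct (Hl (m/2)) as [d [Hd Hd']]; [nra|].
  set (u := Rmin (d/2) ((x0 - r')/2)). set (v := Rmax (1 - d/2) ((1 + x0 + r')/2)).
  assert (Hu : 0 < u /\ u < d /\ u < x0 - r').
  { pose proof (Rmin_l (d/2) ((x0 - r')/2)). pose proof (Rmin_r (d/2) ((x0 - r')/2)).
    split; [apply Rmin_glb_lt; lra|unfold u; lra]. }
  assert (Hv : v < 1 /\ 1 - d < v /\ x0 + r' < v).
  { pose proof (Rmax_l (1 - d/2) ((1 + x0 + r')/2)). pose proof (Rmax_r (1 - d/2) ((1 + x0 + r')/2)).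
    split; [apply Rmax_lub_lt; lra|unfold v; lra]. }
  destruct (Hd' u v) as [_ A]; try lra.
  assert (m <= RInt h u v) by (apply RInt_inside01_monotone; auto; lra).
  revert A H. generalize (RInt h u v). intros; Rabs_cases.
Qed.

Lemma rpow_exp x e : 0 < x -> rpow x e = exp (e * ln x).
Proof. intros. unfold rpow, Rpower. destruct (Req_EM_T x 0); [lra|reflexivity]. Qed.

Lemma rpow_0_l e : rpow 0 e = 0.
Proof. unfold rpow. destruct (Req_EM_T 0 0); [auto|congruence]. Qed.

Lemma rpow_ge_0 x e : 0 <= x -> 0 <= rpow x e.
Proof.
  intros. destruct (Req_dec x 0) as [->|]; [rewrite rpow_0_l; lra|].
  rewrite rpow_exp by lra. left; apply exp_pos.
Qed.

Lemma rpow_le_1 x e : 0 <= x <= 1 -> 0 < e -> rpow x e <= 1.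
Proof.
  intros. destruct (Req_dec x 0) as [->|]; [rewrite rpow_0_l; lra|].
  rewrite rpow_exp, <- exp_0 by lra.
  destruct (Req_dec x 1) as [->|]; [rewrite ln_1, Rmult_0_r; lra|].
  assert (ln x < 0) by (rewrite <- ln_1; apply ln_increasing; lra).
  left. apply exp_increasing. nra.
Qed.

Lemma rpow_lt_near_0 e : 0 < e -> forall eps, 0 < eps -> exists d, 0 < d /\
  forall x, 0 <= x < d -> rpow x e < eps.
Proof.
  intros He eps Heps. exists (exp (ln eps / e)); split; [apply exp_pos|].
  intros x Hx. destruct (Req_dec x 0) as [->|]; [rewrite rpow_0_l; lra|].
  rewrite rpow_exp, <- (exp_ln eps) by lra. apply exp_increasing.
  assert (ln x < ln eps / e) by (rewrite <- (ln_exp (ln eps / e)); apply ln_increasing; lra).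
  apply Rmult_lt_compat_l with (r := e) in H0; [|lra].
  replace (e * (ln eps / e)) with (ln eps) in H0 by (field; lra). lra.
Qed.

Lemma lim_right0_rpow_bound (F : R -> R) K e : 0 < e -> 0 <= K ->
  (forall x, 0 < x < 1 -> Rabs (F x) <= K * rpow x e) -> lim_right0 F 0.
Proof.
  intros He HK HF eps Heps.
  destruct (rpow_lt_near_0 e He (eps / (K + 1))) as [d [Hd H]]; [apply Rdiv_lt_0_compat; lra|].
  exists (Rmin d 1); split; [apply Rmin_glb_lt; lra|]. intros x Hx.
  pose proof (Rmin_l d 1). pose proof (Rmin_r d 1).
  specialize (H x ltac:(lra)). specialize (HF x ltac:(lra)).
  pose proof (rpow_ge_0 x e ltac:(lra)).
  apply Rmult_lt_compat_l with (r := K + 1) in H; [|lra].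
  replace ((K + 1) * (eps / (K + 1))) with eps in H by (field; lra).
  rewrite Rminus_0_r. nra.
Qed.

Lemma lim_left1_rpow_bound (F : R -> R) K e : 0 < e -> 0 <= K ->
  (forall x, 0 < x < 1 -> Rabs (F x) <= K * rpow (1 - x) e) -> lim_left1 F 0.
Proof.
  intros He HK HF eps Heps.
  destruct (lim_right0_rpow_bound (fun y => F (1 - y)) K e He HK) with eps as [d [Hd H]];
    auto.
  - intros y Hy. replace y with (1 - (1 - y)) at 2 by ring. apply HF; lra.
  - exists d; split; auto. intros x Hx. replace x with (1 - (1 - x)) by ring. apply H; lra.
Qed.

Lemma continuous_Rplus (f g : R -> R) x :
  continuous f x -> continuous g x -> continuous (fun y => f y + g y) x.
Proof. exact (@continuous_plus R_UniformSpace R_AbsRing R_NormedModule f g x). Qed.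

Lemma continuous_Rmult (f g : R -> R) x :
  continuous f x -> continuous g x -> continuous (fun y => f y * g y) x.
Proof. exact (@continuous_mult R_UniformSpace R_AbsRing f g x). Qed.

Lemma continuous_Rconst (c x : R) : continuous (fun _ : R => c) x.
Proof. exact (@continuous_const R_UniformSpace R_UniformSpace c x). Qed.

Lemma continuous_Rid (x : R) : continuous (fun y : R => y) x.
Proof. exact (@continuous_id R_UniformSpace x). Qed.

Lemma continuous_Rminus (f g : R -> R) x :
  continuous f x -> continuous g x -> continuous (fun y => f y - g y) x.
Proof.
  intros Hf Hg. apply (continuous_Rplus f (fun y => - g y)); auto.
  exact (@continuous_opp R_UniformSpace R_AbsRing R_NormedModule g x Hg).
Qed.

Lemma continuous_Rdiv (f g : R -> R) x :
  continuous f x -> continuous g x -> g x <> 0 -> continuous (fun y => f y / g y) x.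
Proof. intros. apply (continuous_Rmult f (fun y => / g y)); auto. apply continuous_Rinv_comp; auto. Qed.

Lemma continuous_of_is_derive (f : R -> R) x l : is_derive f x l -> continuous f x.
Proof. intros H. apply (@ex_derive_continuous R_AbsRing R_NormedModule). exists l; exact H. Qed.

Lemma locally_ball (x d : R) (P : R -> Prop) : 0 < d ->
  (forall y, Rabs (y - x) < d -> P y) -> locally x P.
Proof. intros Hd H. exists (mkposreal d Hd). intros y Hy. apply H. exact Hy. Qed.

Lemma locally_inside01 (x : R) (P : R -> Prop) : 0 < x < 1 ->
  (forall y, 0 < y < 1 -> P y) -> locally x P.
Proof.
  intros Hx H. apply (locally_ball x (Rmin x (1 - x))); [apply Rmin_glb_lt; lra|].
  intros y Hy. pose proof (Rmin_l x (1 - x)). pose proof (Rmin_r x (1 - x)).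
  apply H. Rabs_cases.
Qed.

(** * The weight *)

Lemma heaviside_cases y : heaviside y = 1 /\ 0 <= y \/ heaviside y = 0 /\ y < 0.
Proof. unfold heaviside. destruct (Rle_dec 0 y); [left|right]; split; lra. Qed.

Section Weight.
Variables a b g A B t : R.
Hypotheses (ha : 0 < a) (hb : 0 < b) (hg : 0 < g) (hA : 0 <= A) (hAB : 0 <= A + B)
  (ht0 : 0 < t) (ht1 : t < 1).

Definition jacobi_part x := rpow x a * rpow (1 - x) b.
Definition jump_part x := rpow (Rabs (x - t)) g * (A + B * heaviside (x - t)).
Let C := A + Rabs B.

Lemma weight_split x : weight a b g A B t x = jacobi_part x * jump_part x.
Proof. unfold weight, jacobi_part, jump_part. ring. Qed.

Lemma jump_coef_bounds y : 0 <= A + B * heaviside y <= C.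
Proof. unfold C. destruct (heaviside_cases y) as [[-> _]|[-> _]]; Rabs_cases. Qed.

Lemma jump_part_ge_0 x : 0 <= jump_part x.
Proof. apply Rmult_le_pos; [apply rpow_ge_0, Rabs_pos|apply jump_coef_bounds]. Qed.

Lemma jump_part_le x : jump_part x <= C * rpow (Rabs (x - t)) g.
Proof.
  pose proof (jump_coef_bounds (x - t)). pose proof (rpow_ge_0 (Rabs (x - t)) g (Rabs_pos _)).
  unfold jump_part. nra.
Qed.

Lemma jump_part_le01 x : 0 <= x <= 1 -> jump_part x <= C.
Proof.
  intros. pose proof (jump_part_le x). pose proof (jump_coef_bounds 0).
  assert (rpow (Rabs (x - t)) g <= 1) by (apply rpow_le_1; auto; split; [apply Rabs_pos|Rabs_cases]).
  nra.
Qed.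

Lemma jump_part_near_t eps : 0 < eps ->
  exists d, 0 < d /\ forall x, Rabs (x - t) < d -> Rabs (jump_part x) < eps.
Proof.
  intros Heps. pose proof (jump_coef_bounds 0) as HC.
  destruct (rpow_lt_near_0 g hg (eps / (C + 1))) as [d [Hd H]]; [apply Rdiv_lt_0_compat; lra|].
  exists d; split; auto. intros x Hx.
  specialize (H (Rabs (x - t)) (conj (Rabs_pos _) Hx)).
  rewrite Rabs_pos_eq by apply jump_part_ge_0.
  pose proof (jump_part_le x). pose proof (rpow_ge_0 (Rabs (x - t)) g (Rabs_pos _)).
  apply Rmult_lt_compat_l with (r := C + 1) in H; [|lra].
  replace ((C + 1) * (eps / (C + 1))) with eps in H by (field; lra). nra.
Qed.

Lemma jump_part_right x : t < x ->
  locally x (fun y => (A + B) * exp (g * ln (y - t)) = jump_part y).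
Proof.
  intros H. apply (locally_ball x (x - t)); [lra|]. intros y Hy.
  assert (t < y) by Rabs_cases. unfold jump_part. rewrite Rabs_pos_eq, rpow_exp by lra.
  destruct (heaviside_cases (y - t)) as [[-> _]|[_ ?]]; [ring|lra].
Qed.

Lemma jump_part_left x : x < t ->
  locally x (fun y => A * exp (g * ln (t - y)) = jump_part y).
Proof.
  intros H. apply (locally_ball x (t - x)); [lra|]. intros y Hy.
  assert (y < t) by Rabs_cases. unfold jump_part. rewrite Rabs_left by lra.
  replace (- (y - t)) with (t - y) by ring. rewrite rpow_exp by lra.
  destruct (heaviside_cases (y - t)) as [[_ ?]|[-> _]]; [lra|ring].
Qed.

Lemma continuous_jump_part x : continuous jump_part x.
Proof.
  destruct (Rtotal_order x t) as [H|[->|H]].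
  - apply (continuous_ext_loc _ _ _ (jump_part_left x H)).
    eapply continuous_of_is_derive. auto_derive; [lra|reflexivity].
  - apply continuous_eps_delta. intros eps Heps.
    destruct (jump_part_near_t eps Heps) as [d [Hd H]]. exists d; split; auto.
    intros y Hy. assert (jump_part t = 0) as ->.
    { unfold jump_part. rewrite Rminus_diag, Rabs_R0, rpow_0_l. ring. }
    rewrite Rminus_0_r. apply H; auto.
  - apply (continuous_ext_loc _ _ _ (jump_part_right x H)).
    eapply continuous_of_is_derive. auto_derive; [lra|reflexivity].
Qed.

Lemma is_derive_shifted_jump_part x :
  is_derive (fun y => (y - t) * jump_part y) x ((g + 1) * jump_part x).
Proof.
  destruct (Rtotal_order x t) as [H|[->|H]].
  - apply is_derive_ext_loc with (fun y => (y - t) * (A * exp (g * ln (t - y)))).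
    { generalize (jump_part_left x H). apply filter_imp. intros y E. now rewrite E. }
    assert (E := jump_part_left x H). apply locally_singleton in E. rewrite <- E.
    auto_derive; [lra|]. change (t + - x) with (t - x). field. lra.
  - apply is_derive_Reals. intros eps Heps.
    destruct (jump_part_near_t eps Heps) as [d [Hd H]].
    exists (mkposreal d Hd). intros h Hh Hlt. simpl in Hlt.
    replace (t + h - t) with h in * by ring.
    replace (((h * jump_part (t + h)) - (t - t) * jump_part t) / h - (g + 1) * jump_part t)
      with (jump_part (t + h)).
    + apply H. replace (t + h - t) with h by ring. auto.
    + unfold jump_part. rewrite Rminus_diag, Rabs_R0, rpow_0_l. field. auto.
  - apply is_derive_ext_loc with (fun y => (y - t) * ((A + B) * exp (g * ln (y - t)))).
    { generalize (jump_part_right x H). apply filter_imp. intros y E. now rewrite E. }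
    assert (E := jump_part_right x H). apply locally_singleton in E. rewrite <- E.
    auto_derive; [lra|]. change (x + - t) with (x - t). field. lra.
Qed.

Lemma jacobi_part_exp x : 0 < x < 1 ->
  locally x (fun y => exp (a * ln y) * exp (b * ln (1 - y)) = jacobi_part y).
Proof.
  intros H. apply locally_inside01; auto. intros y Hy.
  unfold jacobi_part. rewrite !rpow_exp by lra. reflexivity.
Qed.

Lemma is_derive_jacobi_part x : 0 < x < 1 ->
  is_derive jacobi_part x (jacobi_part x * (a / x - b / (1 - x))).
Proof.
  intros H. apply is_derive_ext_loc with (fun y => exp (a * ln y) * exp (b * ln (1 - y)));
    [apply jacobi_part_exp; auto|].
  assert (E := jacobi_part_exp x H). apply locally_singleton in E. rewrite <- E.
  auto_derive; [lra|]. change (1 + - x) with (1 - x). field. lra.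
Qed.

Lemma jacobi_part_bounds x : 0 <= x <= 1 ->
  0 <= jacobi_part x /\ jacobi_part x <= rpow x a /\ jacobi_part x <= rpow (1 - x) b.
Proof.
  intros H. unfold jacobi_part.
  pose proof (rpow_ge_0 x a ltac:(lra)). pose proof (rpow_ge_0 (1 - x) b ltac:(lra)).
  pose proof (rpow_le_1 x a ltac:(lra) ha). pose proof (rpow_le_1 (1 - x) b ltac:(lra) hb).
  repeat split; nra.
Qed.

Lemma continuous_weight x : 0 < x < 1 -> continuous (weight a b g A B t) x.
Proof.
  intros H. apply (continuous_ext (fun y => jacobi_part y * jump_part y));
    [intros; symmetry; apply weight_split|].
  apply continuous_Rmult; [|apply continuous_jump_part].
  eapply continuous_of_is_derive. apply is_derive_jacobi_part; auto.
Qed.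

Lemma weight_bounds x : 0 < x < 1 ->
  0 <= weight a b g A B t x <= C * jacobi_part x.
Proof.
  intros H. rewrite weight_split.
  pose proof (jacobi_part_bounds x ltac:(lra)).
  pose proof (jump_part_ge_0 x). pose proof (jump_part_le01 x ltac:(lra)). split; nra.
Qed.

Lemma weight_ge_0 x : 0 < x < 1 -> 0 <= weight a b g A B t x.
Proof. apply weight_bounds. Qed.

Lemma weight_gt_0_left x : 0 < A -> 0 < x < t -> 0 < weight a b g A B t x.
Proof.
  intros HA' Hx. unfold weight. rewrite !rpow_exp by (try rewrite Rabs_left; lra).
  destruct (heaviside_cases (x - t)) as [[_ ?]|[-> _]]; [lra|].
  repeat apply Rmult_lt_0_compat; try apply exp_pos. lra.
Qed.

Lemma weight_gt_0_right x : 0 < A + B -> t < x < 1 -> 0 < weight a b g A B t x.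
Proof.
  intros HA' Hx. unfold weight. rewrite !rpow_exp by (try rewrite Rabs_right; lra).
  destruct (heaviside_cases (x - t)) as [[-> _]|[_ ?]]; [|lra].
  repeat apply Rmult_lt_0_compat; try apply exp_pos. lra.
Qed.

Let w := weight a b g A B t.

Lemma boundary_term_bounds (q : R -> R) M x :
  (forall x, 0 < x < 1 -> Rabs (q x) <= M) -> 0 < x < 1 ->
  Rabs (q x * jacobi_part x * ((x - t) * jump_part x)) <= M * C * jacobi_part x.
Proof.
  intros HM Hx. specialize (HM x Hx).
  pose proof (jacobi_part_bounds x ltac:(lra)) as [J0 _].
  pose proof (jump_part_ge_0 x). pose proof (jump_part_le01 x ltac:(lra)).
  pose proof (Rabs_pos (q x)).
  assert (Rabs (x - t) <= 1) by Rabs_cases.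
  assert (Rabs (x - t) * jump_part x <= C) by (pose proof (Rabs_pos (x - t)); nra).
  rewrite !Rabs_mult, (Rabs_pos_eq (jacobi_part x)), (Rabs_pos_eq (jump_part x)) by lra.
  assert (0 <= Rabs (x - t) * jump_part x) by (apply Rmult_le_pos; auto; apply Rabs_pos).
  assert (Rabs (q x) * jacobi_part x <= M * jacobi_part x) by nra.
  apply Rle_trans with (M * jacobi_part x * (Rabs (x - t) * jump_part x)).
  - apply Rmult_le_compat_r; auto.
  - replace (M * C * jacobi_part x) with (M * jacobi_part x * C) by ring.
    apply Rmult_le_compat_l; nra.
Qed.

(* On (0,1), [((x - t) w)' = (a + b + g + 1 - a t / x - b (1 - t) / (1 - x)) w]. *)
Lemma is_RInt01_by_parts (q dq : R -> R) M :
  (forall x, 0 < x < 1 -> is_derive q x (dq x)) ->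
  (forall x, 0 < x < 1 -> continuous dq x) ->
  (forall x, 0 < x < 1 -> Rabs (q x) <= M) ->
  is_RInt01 (fun x => dq x * (x - t) * w x + (a + b + g + 1) * (q x * w x)
     - a * t * (q x * w x / x) - b * (1 - t) * (q x * w x / (1 - x))) 0.
Proof.
  intros HD HC HM.
  assert (HM0 : 0 <= M) by (specialize (HM (1/2) ltac:(lra)); pose proof (Rabs_pos (q (1/2))); lra).
  assert (HC0 : 0 <= C) by (pose proof (jump_coef_bounds 0); lra).
  replace 0 with (0 - 0) by ring.
  apply (is_RInt01_derive (fun x => q x * jacobi_part x * ((x - t) * jump_part x))).
  - intros x Hx.
    eapply is_derive_ext; [intros; reflexivity|].
    evar (d : R). replace (_ + _ - _ - _) with d; [apply (is_derive_mult (fun y => q y * jacobi_part y))|].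
    + apply (is_derive_mult q jacobi_part); [apply HD; auto|apply is_derive_jacobi_part; auto|].
      intros; apply Rmult_comm.
    + apply is_derive_shifted_jump_part.
    + intros; apply Rmult_comm.
    + unfold d, w. rewrite weight_split. unfold plus, mult; simpl. field. lra.
  - intros x Hx. pose proof (continuous_weight x Hx) as Cw. fold w in Cw.
    assert (Cq : continuous q x) by (eapply continuous_of_is_derive; apply HD; auto).
    assert (Cqw : continuous (fun y => q y * w y) x) by (apply continuous_Rmult; auto).
    assert (Ct : forall k, continuous (fun y => k - y) x)
      by (intros; apply continuous_Rminus; [apply continuous_Rconst|apply continuous_Rid]).
    repeat apply continuous_Rminus.
    + apply continuous_Rplus; [|apply continuous_Rmult; [apply continuous_Rconst|exact Cqw]].
      apply continuous_Rmult; [apply continuous_Rmult; [apply HC; auto|]|exact Cw].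
      apply continuous_Rminus; [apply continuous_Rid|apply continuous_Rconst].
    + apply continuous_Rmult; [apply continuous_Rconst|].
      apply continuous_Rdiv; [exact Cqw|apply continuous_Rid|lra].
    + apply continuous_Rmult; [apply continuous_Rconst|].
      apply continuous_Rdiv; [exact Cqw|apply Ct|lra].
  - apply (lim_right0_rpow_bound _ (M * C) a); [auto|nra|]. intros x Hx.
    eapply Rle_trans; [apply (boundary_term_bounds q M x HM Hx)|].
    apply Rmult_le_compat_l; [nra|apply jacobi_part_bounds; lra].
  - apply (lim_left1_rpow_bound _ (M * C) b); [auto|nra|]. intros x Hx.
    eapply Rle_trans; [apply (boundary_term_bounds q M x HM Hx)|].
    apply Rmult_le_compat_l; [nra|apply jacobi_part_bounds; lra].
Qed.

(* [x^a / x + (1-x)^b / (1-x)] is integrable on (0,1) and dominates [w], [w / x] and [w / (1 - x)]. *)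
Definition dominating x := rpow x a / x + rpow (1 - x) b / (1 - x).

Lemma dominating_primitive x : 0 < x < 1 ->
  is_derive (fun y => exp (a * ln y) / a - exp (b * ln (1 - y)) / b) x (dominating x).
Proof.
  intros H. unfold dominating. auto_derive; [lra|].
  rewrite !rpow_exp by lra. change (1 + - x) with (1 - x). field. lra.
Qed.

Lemma continuous_dominating x : 0 < x < 1 -> continuous dominating x.
Proof.
  intros H. apply (continuous_ext_loc _ (fun y => exp (a * ln y) / y + exp (b * ln (1 - y)) / (1 - y))).
  - apply locally_inside01; auto. intros y Hy. unfold dominating. rewrite !rpow_exp by lra. reflexivity.
  - eapply continuous_of_is_derive. auto_derive; [lra|reflexivity].
Qed.

Lemma dominating_bounds x : 0 < x < 1 ->
  rpow x a <= dominating x /\ rpow x a / x <= dominating x /\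
  rpow (1 - x) b / (1 - x) <= dominating x.
Proof.
  intros H. unfold dominating.
  pose proof (rpow_ge_0 x a ltac:(lra)). pose proof (rpow_ge_0 (1 - x) b ltac:(lra)).
  assert (rpow x a <= rpow x a / x).
  { unfold Rdiv. rewrite <- (Rmult_1_r (rpow x a)) at 1. apply Rmult_le_compat_l; auto.
    rewrite <- Rinv_1. apply Rinv_le_contravar; lra. }
  assert (0 <= rpow (1 - x) b / (1 - x)) by (apply Rdiv_le_0_compat; lra).
  lra.
Qed.

Lemma RInt_dominating_le u v : 0 < u -> u < v -> v < 1 -> RInt dominating u v <= 1 / a + 1 / b.
Proof.
  intros Hu Huv Hv.
  set (F := fun y => exp (a * ln y) / a - exp (b * ln (1 - y)) / b).
  assert (I : is_RInt dominating u v (minus (F v) (F u))).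
  { apply (is_RInt_derive F dominating); rewrite Rmin_left, Rmax_right by lra; intros;
      [apply dominating_primitive|apply continuous_dominating]; lra. }
  rewrite (is_RInt_unique _ _ _ _ I). unfold F, minus, plus, opp; simpl.
  pose proof (rpow_le_1 v a ltac:(lra) ha). pose proof (rpow_le_1 (1 - u) b ltac:(lra) hb).
  rewrite !rpow_exp in * by lra.
  pose proof (exp_pos (a * ln u)). pose proof (exp_pos (b * ln (1 - v))).
  unfold Rdiv. apply Rinv_0_lt_compat in ha, hb. nra.
Qed.

Lemma ex_RInt01_weight_mult (q e : R -> R) M :
  (forall x, 0 < x < 1 -> continuous q x) ->
  (forall x, 0 < x < 1 -> continuous e x) ->
  (forall x, 0 < x < 1 -> Rabs (q x) <= M) ->
  (forall x, 0 < x < 1 -> 0 <= e x /\ jacobi_part x * e x <= dominating x) ->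
  exists l, is_RInt01 (fun x => q x * w x * e x) l.
Proof.
  intros Cq Ce HM He.
  assert (HC0 : 0 <= C) by (pose proof (jump_coef_bounds 0); lra).
  apply (ex_RInt01_dominated _ dominating (Rabs M * C) (1 / a + 1 / b));
    [| apply continuous_dominating | | | | apply RInt_dominating_le].
  - intros x Hx. apply continuous_Rmult; [apply continuous_Rmult|]; auto.
    apply continuous_weight; auto.
  - intros x Hx. pose proof (dominating_bounds x Hx).
    pose proof (rpow_ge_0 x a ltac:(lra)). lra.
  - apply Rmult_le_pos; auto. apply Rabs_pos.
  - intros x Hx. specialize (He x Hx). specialize (HM x Hx).
    pose proof (weight_bounds x Hx). fold w in H. pose proof (Rle_abs M).
    rewrite !Rabs_mult, (Rabs_pos_eq (w x)), (Rabs_pos_eq (e x)) by lra.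
    assert (w x * e x <= C * dominating x) by nra.
    assert (0 <= w x * e x) by nra. pose proof (Rabs_pos (q x)). nra.
Qed.

Lemma ex_RInt01_weight (q : R -> R) M :
  (forall x, 0 < x < 1 -> continuous q x) -> (forall x, 0 < x < 1 -> Rabs (q x) <= M) ->
  exists l, is_RInt01 (fun x => q x * w x) l.
Proof.
  intros Cq HM. destruct (ex_RInt01_weight_mult q (fun _ => 1) M) as [l Hl]; auto.
  - intros; apply continuous_Rconst.
  - intros x Hx. pose proof (jacobi_part_bounds x ltac:(lra)). pose proof (dominating_bounds x Hx). lra.
  - exists l. eapply is_RInt01_ext; [|exact Hl]. intros; simpl; ring.
Qed.

Lemma ex_RInt01_weight_div_x (q : R -> R) M :
  (forall x, 0 < x < 1 -> continuous q x) -> (forall x, 0 < x < 1 -> Rabs (q x) <= M) ->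
  exists l, is_RInt01 (fun x => q x * w x / x) l.
Proof.
  intros Cq HM. apply (ex_RInt01_weight_mult q (fun x => / x) M); auto.
  - intros. apply continuous_Rinv_comp; [apply continuous_Rid|lra].
  - intros x Hx. pose proof (jacobi_part_bounds x ltac:(lra)). pose proof (dominating_bounds x Hx).
    assert (0 < / x) by (apply Rinv_0_lt_compat; lra). unfold Rdiv in *. nra.
Qed.

Lemma ex_RInt01_weight_div_1x (q : R -> R) M :
  (forall x, 0 < x < 1 -> continuous q x) -> (forall x, 0 < x < 1 -> Rabs (q x) <= M) ->
  exists l, is_RInt01 (fun x => q x * w x / (1 - x)) l.
Proof.
  intros Cq HM. apply (ex_RInt01_weight_mult q (fun x => / (1 - x)) M); auto.
  - intros. apply continuous_Rinv_comp; [apply continuous_Rminus; [apply continuous_Rconst|apply continuous_Rid]|lra].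
  - intros x Hx. pose proof (jacobi_part_bounds x ltac:(lra)). pose proof (dominating_bounds x Hx).
    assert (0 < / (1 - x)) by (apply Rinv_0_lt_compat; lra). unfold Rdiv in *. nra.
Qed.

End Weight.

From mathcomp Require all_boot all_algebra Rstruct ring.

Module OrthogonalPolynomials.
Import all_boot all_algebra Rstruct.
Import GRing.Theory.

Lemma natmulRE (x : R) n : (x *+ n)%R = x * INR n.
Proof. by rewrite INRE RmultE mulr_natr. Qed.

(* Stdlib's [ring] and [field] only see Stdlib's operations, and do not see
   through polynomial evaluations: abstract those as variables first. *)
Ltac abstract_horner :=
  rewrite -?RminusE -?RplusE -?RmultE -?RoppE;
  repeat match goal with |- context [horner ?p ?x] => let u := fresh "u" in set u := horner p x end;
  match goal with |- ?u = ?v => change (@eq R u v) end.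

Ltac Reals_ops_in H :=
  rewrite ?natmulRE -?RminusE -?RplusE -?RmultE -?RoppE -?R1E -?R0E in H.

Lemma is_derive_horner (q : {poly R}) x : is_derive (fun y => q.[y]%R) x (q^`().[x])%R.
Proof.
  elim/poly_ind: q => [|p k IH].
  - apply: (is_derive_ext (fun _ => 0)) => [y|]; first by rewrite horner0.
    rewrite deriv0 horner0. exact: is_derive_const.
  - apply: (is_derive_ext (fun y => p.[y]%R * y + k)) => [y|]; first by rewrite hornerMXaddC.
    rewrite derivMXaddC hornerD hornerM hornerX.
    have -> : (p.[x] + p^`().[x] * x = p^`().[x] * x + p.[x] * 1 + 0)%R
      by rewrite mulr1 addr0 addrC.
    apply: (is_derive_plus (fun y => p.[y]%R * y) (fun _ => k)); last exact: is_derive_const.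
    exact: (is_derive_mult _ _ _ _ _ IH (is_derive_id x) Rmult_comm).
Qed.

Lemma continuous_horner (q : {poly R}) x : continuous (fun y => q.[y]%R) x.
Proof. exact: continuous_of_is_derive (is_derive_horner q x). Qed.

Lemma horner_bounded (q : {poly R}) :
  exists M, forall x, -1 <= x <= 1 -> Rabs (q.[x]%R) <= M.
Proof.
  elim/poly_ind: q => [|p k [M IH]].
  - exists 0 => x _. rewrite horner0 Rabs_R0. lra.
  - exists (Rabs M + Rabs k) => x Hx. rewrite hornerMXaddC -RplusE -RmultE.
    apply: Rle_trans (Rabs_triang _ _) _. rewrite Rabs_mult.
    have := IH x Hx. have := Rle_abs M. have := Rabs_pos (p.[x])%R.
    have : Rabs x <= 1 by Rabs_cases.
    have := Rabs_pos x. nra.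
Qed.

(* A nonzero polynomial cannot vanish at the [size p] distinct points
   [c + (d - c) / (k + 2)], [k < size p]. *)
Lemma poly_nonroot_between (p : {poly R}) c d : (p != 0)%R -> c < d ->
  exists x, c < x < d /\ p.[x]%R <> 0.
Proof.
  move=> Hp Hcd. apply: Classical_Prop.NNPP => N.
  set pt := fun k : nat => c + (d - c) / (INR k + 2).
  have Hpt : forall k : nat, c < pt k < d.
  { move=> k. have := pos_INR k => Hk. rewrite /pt. split.
    - have : 0 < (d - c) / (INR k + 2) by apply: Rdiv_lt_0_compat; lra. lra.
    - have : (d - c) / (INR k + 2) < d - c; last lra.
      apply: (Rmult_lt_reg_r (INR k + 2)); first lra.
      rewrite /Rdiv Rmult_assoc Rinv_l; nra. }
  have Hroots : all (root p) (map pt (iota 0 (size p))).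
  { apply/allP => _ /mapP [k _ ->]. apply/eqP. apply: Classical_Prop.NNPP => Hne.
    apply: N. exists (pt k). by split; [apply: Hpt|]. }
  have Huniq : uniq (map pt (iota 0 (size p))).
  { rewrite map_inj_uniq ?iota_uniq // => k1 k2 E.
    have E' : / (INR k1 + 2) = / (INR k2 + 2).
    { apply: (Rmult_eq_reg_l (d - c)); last lra. move: E. rewrite /pt /Rdiv. lra. }
    apply: INR_eq. have := Rinv_eq_reg _ _ E'. lra. }
  have := max_poly_roots Hp Hroots Huniq. by rewrite size_map size_iota ltnn.
Qed.

Section Moments.
Variables a b g A B t : R.
Hypotheses (ha : 0 < a) (hb : 0 < b) (hg : 0 < g) (hA : 0 <= A) (hAB : 0 <= A + B)
  (ht0 : 0 < t) (ht1 : t < 1).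
Let w := weight a b g A B t.

Definition Iw (q : {poly R}) := Int01 (fun x => q.[x]%R * w x).
Definition Iw_div_x (q : {poly R}) := Int01 (fun x => q.[x]%R * w x / x).
Definition Iw_div_1x (q : {poly R}) := Int01 (fun x => q.[x]%R * w x / (1 - x)).

Lemma horner_bounded01 (q : {poly R}) :
  exists M, forall x, 0 < x < 1 -> Rabs (q.[x]%R) <= M.
Proof. have [M HM] := horner_bounded q. exists M => x Hx. apply: HM. lra. Qed.

Lemma is_RInt01_Iw q : is_RInt01 (fun x => q.[x]%R * w x) (Iw q).
Proof.
  have [M HM] := horner_bounded01 q.
  have [l Hl] := ex_RInt01_weight a b g A B t ha hb hg hA hAB ht0 ht1 _ M
    (fun x _ => continuous_horner q x) HM.
  by rewrite /Iw (Int01_correct _ _ Hl).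
Qed.

Lemma is_RInt01_Iw_div_x q : is_RInt01 (fun x => q.[x]%R * w x / x) (Iw_div_x q).
Proof.
  have [M HM] := horner_bounded01 q.
  have [l Hl] := ex_RInt01_weight_div_x a b g A B t ha hb hg hA hAB ht0 ht1 _ M
    (fun x _ => continuous_horner q x) HM.
  by rewrite /Iw_div_x (Int01_correct _ _ Hl).
Qed.

Lemma is_RInt01_Iw_div_1x q : is_RInt01 (fun x => q.[x]%R * w x / (1 - x)) (Iw_div_1x q).
Proof.
  have [M HM] := horner_bounded01 q.
  have [l Hl] := ex_RInt01_weight_div_1x a b g A B t ha hb hg hA hAB ht0 ht1 _ M
    (fun x _ => continuous_horner q x) HM.
  by rewrite /Iw_div_1x (Int01_correct _ _ Hl).
Qed.

Lemma IwD p q : Iw (p + q) = Iw p + Iw q.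
Proof.
  apply: Int01_correct. apply: is_RInt01_ext (is_RInt01_plus _ _ _ _ (is_RInt01_Iw p) (is_RInt01_Iw q)).
  move=> x _ /=. rewrite hornerD -RplusE. by rewrite Rmult_plus_distr_r.
Qed.

Lemma IwZ k p : Iw (k *: p) = k * Iw p.
Proof.
  apply: Int01_correct. apply: is_RInt01_ext (is_RInt01_scal k _ _ (is_RInt01_Iw p)).
  move=> x _ /=. by rewrite hornerZ -RmultE Rmult_assoc.
Qed.

Lemma Iw0 : Iw 0 = 0.
Proof. by rewrite -(scale0r 0) IwZ Rmult_0_l. Qed.

Lemma Iw_div_x_mulX q : Iw_div_x ('X * q) = Iw q.
Proof.
  apply: Int01_correct. apply: is_RInt01_ext (is_RInt01_Iw q).
  move=> x Hx /=. rewrite hornerM hornerX -RmultE. abstract_horner. field. lra.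
Qed.

Lemma Iw_div_1x_mulX q : Iw_div_1x ('X * q) = Iw_div_1x q - Iw q.
Proof.
  have -> : Iw_div_1x q - Iw q = Iw_div_1x q + -1 * Iw q by ring.
  apply: Int01_correct.
  apply: is_RInt01_ext (is_RInt01_plus _ _ _ _ (is_RInt01_Iw_div_1x q)
                                        (is_RInt01_scal (-1) _ _ (is_RInt01_Iw q))).
  move=> x Hx /=. rewrite hornerM hornerX -RmultE. abstract_horner. field. lra.
Qed.

Lemma Iw_by_parts Q :
  Iw (Q^`() * ('X - t%:P)) + (a + b + g + 1) * Iw Q - a * t * Iw_div_x Q
  - b * (1 - t) * Iw_div_1x Q = 0.
Proof.
  have [M HM] := horner_bounded01 Q.
  have T := is_RInt01_by_parts a b g A B t ha hb hg hA hAB ht0 ht1 (fun x => Q.[x]%R)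
    (fun x => Q^`().[x]%R) M (fun x _ => is_derive_horner Q x)
    (fun x _ => continuous_horner _ x) HM.
  apply: (is_RInt01_unique _ _ _ _ T).
  have -> : forall u v y z, u + (a + b + g + 1) * v - a * t * y - b * (1 - t) * z
      = u + (a + b + g + 1) * v + (- (a * t)) * y + (- (b * (1 - t))) * z
    by move=> *; ring.
  apply: is_RInt01_ext; last first.
  { repeat apply: is_RInt01_plus; try apply: is_RInt01_scal;
      [apply: is_RInt01_Iw|apply: is_RInt01_Iw|apply: is_RInt01_Iw_div_x|apply: is_RInt01_Iw_div_1x]. }
  move=> x _ /=. rewrite hornerM hornerD hornerN hornerX hornerC. rewrite /w. abstract_horner. ring.
Qed.

Lemma Iw_sqr_gt0 (p : {poly R}) : ~ (A = 0 /\ A + B = 0) -> (p != 0)%R -> 0 < Iw (p * p).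
Proof.
  move=> Hnz Hp.
  have [x0 [Hx0 [Hpx0 Hwx0]]] : exists x0, 0 < x0 < 1 /\ p.[x0]%R <> 0 /\ 0 < w x0.
  { case: (Req_dec A 0) => HA0.
    - have [x0 [Hx0 Hpx0]] := poly_nonroot_between p t 1 Hp ht1.
      exists x0. do 2 (split; first by [lra|]).
      apply: weight_gt_0_right => //; lra.
    - have [x0 [Hx0 Hpx0]] := poly_nonroot_between p 0 t Hp ht0.
      exists x0. do 2 (split; first by [lra|]).
      apply: weight_gt_0_left => //; lra. }
  apply: (is_RInt01_gt_0 (fun x => (p * p).[x]%R * w x) _ x0 _ _ Hx0 _ (is_RInt01_Iw _)).
  - move=> x Hx. apply: continuous_Rmult; first exact: continuous_horner.
    exact: continuous_weight.
  - move=> x Hx. rewrite hornerM -RmultE.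
    apply: Rmult_le_pos; first exact: Rle_0_sqr. exact: weight_ge_0.
  - rewrite hornerM -RmultE. apply: Rmult_lt_0_compat => //. exact: Rsqr_pos_lt.
Qed.

Lemma size_sub_lead (q p : {poly R}) m :
  (size q <= m.+1)%N -> (size p <= m.+1)%N -> (p`_m = 1)%R -> (size (q - q`_m *: p)%R <= m)%N.
Proof.
  move=> Hq Hp Hm. apply/leq_sizeP => j Hj. rewrite coefB coefZ.
  case: (ltngtP j m) => Hjm.
  - by move: Hj; rewrite leqNgt Hjm.
  - move/leq_sizeP: Hq => Hq. move/leq_sizeP: Hp => Hp. by rewrite (Hq j) // (Hp j) // mulr0 subrr.
  - by rewrite Hjm Hm mulr1 subrr.
Qed.

Lemma Iw_mul_sub (q p r : {poly R}) k :
  Iw (q * r)%R = Iw ((q - k *: p) * r)%R + k * Iw (p * r)%R.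
Proof. by rewrite -IwZ -IwD scalerAl -mulrDl subrK. Qed.

Lemma coef_XsubC_mul_deriv (p : {poly R}) k :
  ((('X - t%:P) * p^`())`_k = p`_k *+ k - t * (p`_k.+1 *+ k.+1))%R.
Proof.
  rewrite mulrBl coefB coefXM mul_polyC coefZ !coef_deriv.
  by case: k => [|k] /=; rewrite ?mulr0n.
Qed.

Lemma coef_XsubC_mul (p : {poly R}) k :
  ((('X - t%:P) * p)`_k = (if k is k'.+1 then p`_k' else 0) - t * p`_k)%R.
Proof. rewrite mulrBl coefB coefXM mul_polyC coefZ. by case: k. Qed.

Lemma coef_XsubC_mul_X_deriv (p : {poly R}) k :
  ((('X - t%:P) * ('X * p^`()))`_k = (if k is k'.+1 then p`_k' *+ k' else 0) - t * (p`_k *+ k))%R.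
Proof.
  rewrite mulrBl coefB mul_polyC coefZ !coefXM.
  case: k => [|k] /=; first by rewrite !mulr0n.
  rewrite !coef_deriv. by case: k.
Qed.

Lemma coef_X_mul (p : {poly R}) k : (('X * p)`_k = if k is k'.+1 then p`_k' else 0)%R.
Proof. rewrite coefXM. by case: k. Qed.

(** ** The monic orthogonal family *)

Variable c : nat -> nat -> R.
Hypothesis hc : monic_orthogonal c w.

Definition opoly n : {poly R} := \poly_(k < n.+1) c n k.
Local Notation P := opoly.

(* The [p_n] of the header; the value at [n = 0] makes the telescoping start correctly. *)
Definition sublead n := if n is k.+1 then c k.+1 k else 0.

Lemma coef_opoly n k : ((P n)`_k)%R = if (k <= n)%N then c n k else 0.
Proof. by rewrite coef_poly. Qed.

Lemma coef_opoly_lead n : ((P n)`_n)%R = 1.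
Proof. by rewrite coef_opoly leqnn (proj1 hc). Qed.

Lemma coef_opoly_gt n k : (n < k)%N -> ((P n)`_k)%R = 0.
Proof. by move=> Hk; rewrite coef_opoly leqNgt Hk. Qed.

Lemma coef_opoly_sublead n : ((P n.+1)`_n)%R = sublead n.+1.
Proof. by rewrite coef_opoly leqnSn. Qed.

Lemma size_opoly n : size (P n) = n.+1.
Proof. by rewrite size_poly_eq //= (proj1 hc) oner_neq0. Qed.

Lemma peval_opoly n x : peval c n x = (P n).[x]%R.
Proof.
  rewrite /peval horner_poly sum_f_R0E big_mkord.
  by apply: eq_bigr => i _; rewrite RpowE.
Qed.

Lemma Iw_opoly_orth m n : m <> n -> Iw (P m * P n)%R = 0.
Proof.
  move=> Hmn. rewrite -((proj2 hc) m n Hmn) /Iw.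
  congr Int01. apply: functional_extensionality => x. by rewrite !peval_opoly hornerM.
Qed.

Lemma Iw_opoly_low n (q : {poly R}) : (size q <= n)%N -> Iw (q * P n)%R = 0.
Proof.
  suff low : forall k, (k <= n)%N -> forall q : {poly R}, (size q <= k)%N -> Iw (q * P n)%R = 0
    by move=> Hq; exact: (low n (leqnn n) q Hq).
  elim=> [|k IH] Hk {}q Hq; first by move/size_poly_leq0P: Hq => ->; rewrite mul0r Iw0.
  rewrite (Iw_mul_sub q (P k) _ q`_k) Iw_opoly_orth; last by move=> E; rewrite E ltnn in Hk.
  rewrite Rmult_0_r Rplus_0_r. apply: IH; first exact: ltnW.
  by apply: size_sub_lead; rewrite ?size_opoly ?coef_opoly_lead.
Qed.

Lemma Iw_opoly_coef n (q : {poly R}) : (size q <= n.+1)%N ->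
  Iw (q * P n)%R = (q`_n)%R * Iw (P n * P n)%R.
Proof.
  move=> Hq. rewrite (Iw_mul_sub q (P n) _ q`_n) Iw_opoly_low ?Rplus_0_l //.
  by apply: size_sub_lead; rewrite ?size_opoly ?coef_opoly_lead.
Qed.

Lemma Iw_opoly_coef2 n (q : {poly R}) : (size q <= n.+2)%N ->
  Iw (q * P n)%R = (q`_n - q`_n.+1 * sublead n.+1)%R * Iw (P n * P n)%R.
Proof.
  move=> Hq. rewrite (Iw_mul_sub q (P n.+1) _ q`_n.+1) Iw_opoly_orth; last by lia.
  rewrite Rmult_0_r Rplus_0_r Iw_opoly_coef.
  - by rewrite coefB coefZ coef_opoly_sublead.
  - by apply: size_sub_lead; rewrite ?size_opoly ?coef_opoly_lead.
Qed.

Lemma size_XsubC_mul_deriv_opoly n : (size (('X - t%:P) * (P n)^`())%R <= n.+1)%N.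
Proof.
  apply/leq_sizeP => j Hj. rewrite coef_XsubC_mul_deriv !coef_opoly_gt; try lia.
  by rewrite !mul0rn mulr0 subrr.
Qed.

Lemma size_XsubC_mul_opoly n : (size (('X - t%:P) * P n)%R <= n.+2)%N.
Proof.
  apply/leq_sizeP => j Hj. rewrite coef_XsubC_mul.
  case: j Hj => [|j] Hj //. rewrite !coef_opoly_gt; try lia. by rewrite mulr0 subrr.
Qed.

Lemma size_XsubC_mul_X_deriv_opoly n : (size (('X - t%:P) * ('X * (P n)^`()))%R <= n.+2)%N.
Proof.
  apply/leq_sizeP => j Hj. rewrite coef_XsubC_mul_X_deriv.
  case: j Hj => [|j] Hj //. rewrite !coef_opoly_gt; try lia. by rewrite !mul0rn mulr0 subrr.
Qed.

Lemma size_X_mul_opoly n : (size ('X * P n)%R <= n.+2)%N.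
Proof.
  apply/leq_sizeP => j Hj. rewrite coef_X_mul.
  case: j Hj => [|j] Hj //. rewrite coef_opoly_gt //; lia.
Qed.

Section PolynomialIdentities.
Import ring.

Lemma by_parts_poly_offdiag m : ((P m.+1 * P m)^`() * ('X - t%:P) =
  (('X - t%:P) * (P m.+1)^`()) * P m + (('X - t%:P) * (P m)^`()) * P m.+1)%R.
Proof. rewrite derivM. ring. Qed.

Definition diag_factor j : {poly R} :=
  (('X - t%:P) * P j + (('X - t%:P) * ('X * (P j)^`())) *+ 2)%R.

Lemma by_parts_poly_diag j : (('X * (P j * P j))^`() * ('X - t%:P) = diag_factor j * P j)%R.
Proof. rewrite /diag_factor !derivM derivX. ring. Qed.

End PolynomialIdentities.

Lemma coef_XsubC_mul_deriv_opoly_m m :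
  ((('X - t%:P) * (P m.+1)^`())`_m = sublead m.+1 *+ m - t * (1 *+ m.+1))%R.
Proof. by rewrite coef_XsubC_mul_deriv coef_opoly_sublead coef_opoly_lead. Qed.

Lemma coef_XsubC_mul_deriv_opoly_m1 m : ((('X - t%:P) * (P m.+1)^`())`_m.+1 = 1 *+ m.+1)%R.
Proof.
  by rewrite coef_XsubC_mul_deriv coef_opoly_lead coef_opoly_gt // mul0rn mulr0 subr0.
Qed.

Lemma coef_diag_factor_j j :
  ((diag_factor j)`_j = sublead j - t + (sublead j *+ j.-1 - t * (1 *+ j)) *+ 2)%R.
Proof.
  rewrite coefD coefMn coef_XsubC_mul coef_XsubC_mul_X_deriv coef_opoly_lead.
  case: j => [|j] /=; first by rewrite mulr1 mulr0n.
  by rewrite coef_opoly_sublead mulr1.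
Qed.

Lemma coef_diag_factor_j1 j : ((diag_factor j)`_j.+1 = 1 + (1 *+ j) *+ 2)%R.
Proof.
  rewrite coefD coefMn coef_XsubC_mul coef_XsubC_mul_X_deriv coef_opoly_lead coef_opoly_gt //.
  by rewrite mul0rn !mulr0 !subr0.
Qed.

Lemma size_diag_factor j : (size (diag_factor j) <= j.+2)%N.
Proof.
  move/leq_sizeP: (size_XsubC_mul_opoly j) => H1.
  move/leq_sizeP: (size_XsubC_mul_X_deriv_opoly j) => H2.
  apply/leq_sizeP => k Hk. by rewrite coefD coefMn H1 // H2 // mul0rn addr0.
Qed.

Lemma coef_X_mul_opoly_j j : (('X * P j)`_j)%R = sublead j.
Proof. rewrite coef_X_mul. case: j => [|j] //. by rewrite coef_opoly_sublead. Qed.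

Lemma coef_X_mul_opoly_j1 j : (('X * P j)`_j.+1 = 1)%R.
Proof. by rewrite coef_X_mul coef_opoly_lead. Qed.

Hypothesis hnz : ~ (A = 0 /\ A + B = 0).

Let h j := Iw (P j * P j)%R.

Lemma Iw_opoly_sqr_gt0 j : 0 < h j.
Proof. apply: Iw_sqr_gt0 => //. by rewrite -size_poly_eq0 size_opoly. Qed.

Lemma hn_opoly j : hn c w j = h j.
Proof.
  rewrite /hn /h /Iw. congr Int01. apply: functional_extensionality => y.
  rewrite peval_opoly hornerM /=. abstract_horner. ring.
Qed.

Lemma Rn_opoly j : Rn b c w j = b / h j * Iw_div_1x (P j * P j)%R.
Proof.
  rewrite /Rn hn_opoly /Iw_div_1x. congr (_ * Int01 _). apply: functional_extensionality => y.
  rewrite peval_opoly hornerM /=. abstract_horner. rewrite /Rdiv. ring.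
Qed.

Lemma yn_opoly m : yn a c w m.+1 = a / h m * Iw_div_x (P m.+1 * P m)%R.
Proof.
  rewrite /yn Nat.sub_succ Nat.sub_0_r hn_opoly /Iw_div_x. congr (_ * Int01 _).
  apply: functional_extensionality => y. by rewrite !peval_opoly hornerM.
Qed.

Lemma rn_opoly m : rn b c w m.+1 = b / h m * Iw_div_1x (P m.+1 * P m)%R.
Proof.
  rewrite /rn Nat.sub_succ Nat.sub_0_r hn_opoly /Iw_div_1x. congr (_ * Int01 _).
  apply: functional_extensionality => y. by rewrite !peval_opoly hornerM.
Qed.

Lemma yn_rn_identity m :
  t * yn a c w m.+1 + (1 - t) * rn b c w m.+1 = - sublead m.+1 - t * INR m.+1.
Proof.
  have T := Iw_by_parts (P m.+1 * P m).
  rewrite by_parts_poly_offdiag IwD Iw_opoly_orth in T; last by lia.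
  rewrite (Iw_opoly_coef2 m _ (size_XsubC_mul_deriv_opoly m.+1)) in T.
  rewrite (Iw_opoly_low m.+1 _ (size_XsubC_mul_deriv_opoly m)) in T.
  rewrite coef_XsubC_mul_deriv_opoly_m coef_XsubC_mul_deriv_opoly_m1 in T.
  Reals_ops_in T.
  rewrite yn_opoly rn_opoly. have Hh := Iw_opoly_sqr_gt0 m. rewrite S_INR in T |- *.
  apply: (Rmult_eq_reg_r (h m)); last lra.
  have -> : (t * (a / h m * Iw_div_x (P m.+1 * P m)%R)
             + (1 - t) * (b / h m * Iw_div_1x (P m.+1 * P m)%R)) * h m
           = a * t * Iw_div_x (P m.+1 * P m)%R + b * (1 - t) * Iw_div_1x (P m.+1 * P m)%R
    by field; lra.
  rewrite /h in Hh |- *. lra.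
Qed.

Lemma sublead_mul_pred j : sublead j * INR j.-1 = sublead j * (INR j - 1).
Proof. case: j => [|j]; first by rewrite /sublead !Rmult_0_l. rewrite S_INR /=. ring. Qed.

Lemma Rn_identity j : (1 - t) * Rn b c w j =
  (2 * INR j + 2 + a + b + g) * (sublead j - sublead j.+1) - 2 * sublead j
  - t * (2 * INR j + 1 + a + b) + b.
Proof.
  have T := Iw_by_parts ('X * (P j * P j)).
  rewrite Iw_div_x_mulX Iw_div_1x_mulX by_parts_poly_diag (mulrA ('X)%R (P j) (P j)) in T.
  rewrite (Iw_opoly_coef2 j _ (size_diag_factor j)) (Iw_opoly_coef2 j _ (size_X_mul_opoly j)) in T.
  rewrite coef_diag_factor_j coef_diag_factor_j1 coef_X_mul_opoly_j coef_X_mul_opoly_j1 in T.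
  Reals_ops_in T. rewrite sublead_mul_pred in T.
  have E2 : INR 2 = 2 by rewrite /=; ring.
  rewrite E2 in T.
  rewrite Rn_opoly. have Hh := Iw_opoly_sqr_gt0 j.
  apply: (Rmult_eq_reg_r (h j)); last lra.
  have -> : (1 - t) * (b / h j * Iw_div_1x (P j * P j)%R) * h j
           = b * (1 - t) * Iw_div_1x (P j * P j)%R by field; lra.
  rewrite /h in Hh |- *. lra.
Qed.

Lemma sum_Rn_identity m : (1 - t) * sum_f_R0 (Rn b c w) m =
  - (2 * INR m.+1 + a + b + g) * sublead m.+1 + INR m.+1 * b
  - t * INR m.+1 * (INR m.+1 + a + b).
Proof.
  elim: m => [|m IH]; first by rewrite /= Rn_identity /=; ring.
  rewrite tech5 Rmult_plus_distr_l IH Rn_identity !S_INR. ring.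
Qed.

End Moments.

End OrthogonalPolynomials.

Theorem mainTheorem5 (a b g A B : R) (ha : 0 < a) (hb : 0 < b) (hg : 0 < g)
  (hA : 0 <= A) (hAB : 0 <= A + B) (hnz : ~ (A = 0 /\ A + B = 0))
  (t : R) (ht : 0 < t < 1) (c : nat -> nat -> R)
  (hc : monic_orthogonal c (weight a b g A B t)) (n : nat) (hn1 : (1 <= n)%nat) :
  let w := weight a b g A B t in
  INR n * b + INR n * (INR n + g) * t
  - (2 * INR n + a + b + g) * (t - 1) * rn b c w n
  + (2 * INR n + a + b + g) * t * yn a c w n
  + (t - 1) * sum_f_R0 (fun j => Rn b c w j) (n - 1) = 0.
Proof.
  intros w. destruct ht as [ht0 ht1].
  destruct n as [|m]; [lia|]. replace (S m - 1)%nat with m by lia.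
  change (sum_f_R0 (fun j => Rn b c w j) m) with (sum_f_R0 (Rn b c w) m).
  pose proof (OrthogonalPolynomials.yn_rn_identity a b g A B t ha hb hg hA hAB ht0 ht1
                c hc hnz m) as Hyr.
  pose proof (OrthogonalPolynomials.sum_Rn_identity a b g A B t ha hb hg hA hAB ht0 ht1
                c hc hnz m) as HR.
  fold w in Hyr, HR.
  transitivity (INR (S m) * b + INR (S m) * (INR (S m) + g) * t
    + (2 * INR (S m) + a + b + g) * (t * yn a c w (S m) + (1 - t) * rn b c w (S m))
    - (1 - t) * sum_f_R0 (Rn b c w) m); [ring|].
  rewrite Hyr, HR. ring.
Qed.
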